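(* Fix $\theta$ with $1\le\theta\le 2.13$. For $r\in[4.999,5]$ let $q_r(x)=1-(r-\theta)x+(r-2\theta)x^2+\theta x^3$ and let $\gamma(r)$ be the unique root of $q_r$ in the interval $(0,0.56)$. Then $\gamma(r)$ is strictly decreasing in $r$ on $[4.999,5]$, and so is $\frac{1}{1-\gamma(r)}-\theta$.
   Context: For such $r,\theta$, the polynomial $q_r$ has exactly one root in $(0,0.56)$ and one root in $(0.56,1)$, and one root less than $-1$. *)

From Stdlib Require Import Reals Lra.
Open Scope R_scope.

Definition q (theta r x : R) : R :=
  1 - (r - theta) * x + (r - 2 * theta) * x ^ 2 + theta * x ^ 3.

Definition is_gamma (theta r g : R) : Prop :=
  0 < g < 56 / 100 /\ q theta r g = 0.

(* The cubic changes sign only once on (0, 0.56): after weighting by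
   x (1 - x)^2 the parameter theta cancels, and
     x (1-x)^2 q(y) - y (1-y)^2 q(x) = -(y - x) q_cross(x, y)
   with q_cross > 0 on (0, 0.56)^2 as soon as r >= 4.999.  Hence once q is
   nonpositive it stays negative to the right.  Since q(0) = 1 > 0 > q(0.56),
   the root exists and is unique; since q_r(x) has r-derivative -x (1 - x) < 0,
   the root moves to the left as r grows. *)
From Stdlib Require Import Reals Lra Psatz.
Open Scope R_scope.

Definition q_cross (r x y : R) : R :=
  r * x * y * (1 - x) * (1 - y) + 1 - 2 * (x + y) + x ^ 2 + x * y + y ^ 2.

Lemma q_cross_identity theta r x y :
  x * (1 - x) ^ 2 * q theta r y =
  y * (1 - y) ^ 2 * q theta r x - (y - x) * q_cross r x y.
Proof. unfold q, q_cross; ring. Qed.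

Lemma q_cross_pos r x y :
  4999 / 1000 <= r -> 0 < x < 56 / 100 -> 0 < y < 56 / 100 ->
  0 < q_cross r x y.
Proof.
intros Hr Hx Hy; unfold q_cross.
assert (Hxy : 0 <= (56 / 100 - x) * (56 / 100 - y)) by nra.
assert (Hw : 0 < x * y * (1 - x) * (1 - y)).
{ repeat apply Rmult_lt_0_compat; lra. }
assert (Hmin : 0 < 4999 / 1000 * (x * y * (1 - x) * (1 - y))
                   + 1 - 2 * (x + y) + x ^ 2 + x * y + y ^ 2) by nra.
nra.
Qed.

Lemma q_neg_right_of_nonpos theta r x y :
  4999 / 1000 <= r -> 0 < x -> x < y -> y < 56 / 100 ->
  q theta r x <= 0 -> q theta r y < 0.
Proof.
intros Hr Hx Hxy Hy Hqx.
pose proof (q_cross_identity theta r x y) as E.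
pose proof (q_cross_pos r x y Hr ltac:(lra) ltac:(lra)) as HM.
assert (0 < x * (1 - x) ^ 2) by (apply Rmult_lt_0_compat; nra).
assert (0 < y * (1 - y) ^ 2) by (apply Rmult_lt_0_compat; nra).
assert (0 < (y - x) * q_cross r x y) by (apply Rmult_lt_0_compat; lra).
assert (y * (1 - y) ^ 2 * q theta r x <= 0) by nra.
nra.
Qed.

Lemma q_continuous theta r : continuity (q theta r).
Proof. unfold q; reg. Qed.

Lemma q_at_0 theta r : q theta r 0 = 1.
Proof. unfold q; ring. Qed.

Lemma q_at_056_neg theta r :
  theta <= 213 / 100 -> 4999 / 1000 <= r -> q theta r (56 / 100) < 0.
Proof. intros; unfold q; lra. Qed.

Lemma q_shift_param theta r1 r2 x :
  q theta r2 x = q theta r1 x - (r2 - r1) * (x * (1 - x)).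
Proof. unfold q; ring. Qed.

Lemma is_gamma_unique theta r a b :
  4999 / 1000 <= r -> is_gamma theta r a -> is_gamma theta r b -> a = b.
Proof.
intros Hr [Ha Qa] [Hb Qb].
destruct (Rtotal_order a b) as [Hab | [Hab | Hab]]; [| exact Hab |].
- pose proof (q_neg_right_of_nonpos theta r a b Hr ltac:(lra) Hab ltac:(lra)
    ltac:(lra)); lra.
- pose proof (q_neg_right_of_nonpos theta r b a Hr ltac:(lra) Hab ltac:(lra)
    ltac:(lra)); lra.
Qed.

Lemma is_gamma_exists theta r :
  theta <= 213 / 100 -> 4999 / 1000 <= r -> exists g, is_gamma theta r g.
Proof.
intros Ht Hr.
pose proof (q_at_0 theta r) as Q0.
pose proof (q_at_056_neg theta r Ht Hr) as Q1.
assert (Hc : continuity (fun x => - q theta r x)).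
{ apply continuity_opp, q_continuous. }
destruct (IVT _ 0 (56 / 100) Hc ltac:(lra) ltac:(lra) ltac:(lra))
  as [g [Hg Qg]].
assert (Qg0 : q theta r g = 0) by lra.
assert (g <> 0) by (intro; subst; lra).
assert (g <> 56 / 100) by (intro; subst; lra).
exists g; split; [lra | exact Qg0].
Qed.

Lemma is_gamma_decreasing theta r1 r2 g1 g2 :
  4999 / 1000 <= r1 -> r1 < r2 ->
  is_gamma theta r1 g1 -> is_gamma theta r2 g2 -> g2 < g1.
Proof.
intros Hr1 Hr12 [Hg1 Q1] [Hg2 Q2].
assert (Q21 : q theta r2 g1 < 0).
{ rewrite (q_shift_param theta r1 r2 g1).
  assert (0 < (r2 - r1) * (g1 * (1 - g1))) by (apply Rmult_lt_0_compat; nra).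
  lra. }
destruct (Rtotal_order g2 g1) as [H | [H | H]]; [exact H | subst; lra |].
pose proof (q_neg_right_of_nonpos theta r2 g1 g2 ltac:(lra) ltac:(lra) H
  ltac:(lra) ltac:(lra)); lra.
Qed.

Lemma inv_one_minus_lt a b : a < b < 1 -> 1 / (1 - a) < 1 / (1 - b).
Proof.
intros H; unfold Rdiv; rewrite !Rmult_1_l.
apply Rinv_lt_contravar; nra.
Qed.

Theorem mainTheorem9 (theta : R) :
  1 <= theta <= 213 / 100 ->
  (forall r, 4999 / 1000 <= r <= 5 -> exists! g, is_gamma theta r g) /\
  (forall r1 r2 g1 g2,
      4999 / 1000 <= r1 -> r1 < r2 -> r2 <= 5 ->
      is_gamma theta r1 g1 -> is_gamma theta r2 g2 ->
      g2 < g1 /\ 1 / (1 - g2) - theta < 1 / (1 - g1) - theta).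
Proof.
intros Ht; split.
- intros r Hr.
  destruct (is_gamma_exists theta r ltac:(lra) ltac:(lra)) as [g Hg].
  exists g; split; [exact Hg |].
  intros g' Hg'; exact (is_gamma_unique theta r g g' ltac:(lra) Hg Hg').
- intros r1 r2 g1 g2 Hr1 Hr12 _ Hg1 Hg2.
  pose proof (is_gamma_decreasing theta r1 r2 g1 g2 Hr1 Hr12 Hg1 Hg2) as Hlt.
  destruct Hg1 as [Hg1 _].
  split; [exact Hlt |].
  pose proof (inv_one_minus_lt g2 g1 ltac:(lra)); lra.
Qed.
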